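(* Assume (A1)–(A4) and let $b$ be consistent. Let $(\hat x,\hat y)$ be any feasible point. Then the real sequence $\{D_{\mu_k}f(\hat y,y_k)\}_{k\ge1}$ generated by the ADMM is convergent.
   Context: $\mathcal X,\mathcal Y,\mathcal H$ are real Hilbert spaces. Standing assumptions: (A1) $A:\mathcal X\to\mathcal H$ is bounded linear. (A2) $f:\mathcal Y\to(-\infty,\infty]$ is proper, lower semicontinuous and strongly convex with constant $c_0>0$: $f(ty_1+(1-t)y_2)+c_0t(1-t)\|y_1-y_2\|^2\le tf(y_1)+(1-t)f(y_2)$ for all $y_1,y_2$, $t\in[0,1]$. (A3) $W:\mathscr D(W)\subset\mathcal X\to\mathcal Y$ is a densely defined closed linear operator. (A4) There is $c_1>0$ with $\|Ax\|^2+\|Wx\|^2\ge c_1\|x\|^2$ for all $x\in\mathscr D(W)$. $\mathscr D(f)=\{y:f(y)<\infty\}$; $b$ is consistent if $b=Ax$ for some $x\in\mathscr D(W)$ with $Wx\in\mathscr D(f)$. A feasible point is a pair $(\hat x,\hat y)$ with $\hat x\in\mathscr D(W)$, $\hat y\in\mathscr D(f)$, $A\hat x=b$, $W\hat x=\hat y$. ADMM: fix $\rho_1,\rho_2>0$ and initial $y_0\in\mathcal Y$, $\lambda_0\in\mathcal H$, $\mu_0\in\mathcal Y$. For $k=0,1,\dots$: $x_{k+1}=\arg\min_{x\in\mathscr D(W)}\{\langle\lambda_k,Ax\rangle+\langle\mu_k,Wx\rangle+\frac{\rho_1}{2}\|Ax-b\|^2+\frac{\rho_2}{2}\|Wx-y_k\|^2\}$,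 $y_{k+1}=\arg\min_{y\in\mathcal Y}\{f(y)-\langle\mu_k,y\rangle+\frac{\rho_2}{2}\|Wx_{k+1}-y\|^2\}$, $\lambda_{k+1}=\lambda_k+\rho_1(Ax_{k+1}-b)$, $\mu_{k+1}=\mu_k+\rho_2(Wx_{k+1}-y_{k+1})$. (These minimizers exist and are unique.) One has $\mu_k\in\partial f(y_k)$ for $k\ge1$. Bregman distance: for $y$ with $\mu\in\partial f(y)$, $D_\mu f(\bar y,y)=f(\bar y)-f(y)-\langle\mu,\bar y-y\rangle$. *)

From Stdlib Require Import Reals Lra.
Open Scope R_scope.

Record Hilbert := {
  hcar :> Type;
  hzero : hcar;
  hadd : hcar -> hcar -> hcar;
  hopp : hcar -> hcar;
  hscal : R -> hcar -> hcar;
  hinner : hcar -> hcar -> R;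
  hadd_assoc : forall u v w, hadd u (hadd v w) = hadd (hadd u v) w;
  hadd_comm : forall u v, hadd u v = hadd v u;
  hadd_zero : forall u, hadd u hzero = u;
  hadd_opp : forall u, hadd u (hopp u) = hzero;
  hscal_one : forall u, hscal 1 u = u;
  hscal_assoc : forall a b u, hscal a (hscal b u) = hscal (a * b) u;
  hscal_distr_l : forall a u v, hscal a (hadd u v) = hadd (hscal a u) (hscal a v);
  hscal_distr_r : forall a b u, hscal (a + b) u = hadd (hscal a u) (hscal b u);
  hinner_sym : forall u v, hinner u v = hinner v u;
  hinner_add_l : forall u v w, hinner (hadd u v) w = hinner u w + hinner v w;
  hinner_scal_l : forall a u v, hinner (hscal a u) v = a * hinner u v;
  hinner_pos : forall u, 0 <= hinner u u;
  hinner_def : forall u, hinner u u = 0 -> u = hzero;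
  hcomplete : forall s : nat -> hcar,
    (forall eps, eps > 0 -> exists N, forall n m, (n >= N)%nat -> (m >= N)%nat ->
        sqrt (hinner (hadd (s n) (hopp (s m))) (hadd (s n) (hopp (s m)))) < eps) ->
    exists l, forall eps, eps > 0 -> exists N, forall n, (n >= N)%nat ->
        sqrt (hinner (hadd (s n) (hopp l)) (hadd (s n) (hopp l))) < eps
}.

Arguments hzero {h}.
Arguments hadd {h}.
Arguments hopp {h}.
Arguments hscal {h}.
Arguments hinner {h}.

Definition hsub {H : Hilbert} (u v : H) : H := hadd u (hopp v).
Definition hnorm {H : Hilbert} (u : H) : R := sqrt (hinner u u).

Definition is_linear {X Y : Hilbert} (T : X -> Y) : Prop :=
  (forall u v, T (hadd u v) = hadd (T u) (T v)) /\
  (forall a u, T (hscal a u) = hscal a (T u)).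

Definition bounded_linear {X Y : Hilbert} (T : X -> Y) : Prop :=
  is_linear T /\ exists C, forall u, hnorm (T u) <= C * hnorm u.

(* An (unbounded) linear operator W : D(W) ⊂ X -> Y is represented by a domain
   predicate DW and a map W : X -> Y whose values outside DW are irrelevant. *)
Definition linear_subspace {X : Hilbert} (D : X -> Prop) : Prop :=
  D hzero /\ (forall u v, D u -> D v -> D (hadd u v)) /\
  (forall a u, D u -> D (hscal a u)).

Definition densely_defined_closed_linear {X Y : Hilbert}
    (DW : X -> Prop) (W : X -> Y) : Prop :=
  linear_subspace DW /\
  (forall u v, DW u -> DW v -> W (hadd u v) = hadd (W u) (W v)) /\
  (forall a u, DW u -> W (hscal a u) = hscal a (W u)) /\
  (forall x eps, eps > 0 -> exists z, DW z /\ hnorm (hsub x z) < eps) /\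
  (forall (s : nat -> X) (x : X) (y : Y),
     (forall n, DW (s n)) ->
     Un_cv (fun n => hnorm (hsub (s n) x)) 0 ->
     Un_cv (fun n => hnorm (hsub (W (s n)) y)) 0 ->
     DW x /\ W x = y).

Inductive ereal := Fin (r : R) | PInf.

Definition in_dom {Y : Hilbert} (f : Y -> ereal) (y : Y) : Prop :=
  exists r, f y = Fin r.

Definition proper {Y : Hilbert} (f : Y -> ereal) : Prop :=
  exists y, in_dom f y.

Definition ereal_gt (e : ereal) (c : R) : Prop :=
  match e with Fin r => c < r | PInf => True end.

Definition lower_semicontinuous {Y : Hilbert} (f : Y -> ereal) : Prop :=
  forall y c, ereal_gt (f y) c ->
    exists delta, delta > 0 /\ forall z, hnorm (hsub z y) < delta -> ereal_gt (f z) c.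

(* strong convexity with constant c0 (convention 0 * (+oo) = 0; the
   inequality is trivial unless both f y1, f y2 are finite) *)
Definition strongly_convex {Y : Hilbert} (f : Y -> ereal) (c0 : R) : Prop :=
  forall (y1 y2 : Y) (t a1 a2 : R), 0 <= t <= 1 ->
    f y1 = Fin a1 -> f y2 = Fin a2 ->
    exists b, f (hadd (hscal t y1) (hscal (1 - t) y2)) = Fin b /\
      b + c0 * t * (1 - t) * (hnorm (hsub y1 y2))^2 <= t * a1 + (1 - t) * a2.

Definition subdiff {Y : Hilbert} (f : Y -> ereal) (y mu : Y) : Prop :=
  exists a, f y = Fin a /\
    forall z b, f z = Fin b -> a + hinner mu (hsub z y) <= b.

(* real part of an extended real (only used on finite values) *)
Definition real_of (e : ereal) : R := match e with Fin r => r | PInf => 0 end.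

(* Bregman distance D_mu f(ybar, y) = f(ybar) - f(y) - <mu, ybar - y>,
   used only when ybar, y are in dom f *)
Definition bregman {Y : Hilbert} (f : Y -> ereal) (mu ybar y : Y) : R :=
  real_of (f ybar) - real_of (f y) - hinner mu (hsub ybar y).

Definition x_objective {X Y H : Hilbert} (A : X -> H) (W : X -> Y) (b : H)
    (rho1 rho2 : R) (lam : H) (mu y : Y) (x : X) : R :=
  hinner lam (A x) + hinner mu (W x) + rho1 / 2 * (hnorm (hsub (A x) b))^2
  + rho2 / 2 * (hnorm (hsub (W x) y))^2.

Definition y_objective {Y : Hilbert} (f : Y -> ereal) (rho2 : R) (mu w y : Y)
    : R :=
  real_of (f y) - hinner mu y + rho2 / 2 * (hnorm (hsub w y))^2.

Definition is_ADMM_sequence {X Y H : Hilbert} (A : X -> H) (DW : X -> Prop)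
    (W : X -> Y) (f : Y -> ereal) (b : H) (rho1 rho2 : R)
    (x : nat -> X) (y : nat -> Y) (lam : nat -> H) (mu : nat -> Y) : Prop :=
  forall k : nat,
    (DW (x (S k)) /\
     forall z, DW z ->
       x_objective A W b rho1 rho2 (lam k) (mu k) (y k) (x (S k))
       <= x_objective A W b rho1 rho2 (lam k) (mu k) (y k) z) /\
    (* y_{k+1} = argmin over Y of an objective that is +oo outside dom f *)
    (in_dom f (y (S k)) /\
     forall z, in_dom f z ->
       y_objective f rho2 (mu k) (W (x (S k))) (y (S k))
       <= y_objective f rho2 (mu k) (W (x (S k))) z) /\
    lam (S k) = hadd (lam k) (hscal rho1 (hsub (A (x (S k))) b)) /\
    mu (S k) = hadd (mu k) (hscal rho2 (hsub (W (x (S k))) (y (S k)))).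

(* The x-update is characterised by a stationarity identity holding against
   every test direction in D(W), and the y-update by a strong subgradient inequality for f.
   Testing the difference of two consecutive stationarity identities with x_(k+1) - xhat
   and with x_(k+1) - x_k, and combining with the strong monotonicity of the subgradients
   mu_k, shows that
     E_k = D_k + rho2 <y_k - y_(k-1), W x_k - yhat>
           + al (rho1 |A x_k - b|^2 + rho2 |W x_k - y_(k-1)|^2),   al = 1 + 2 rho2 / c0,
   is nonnegative and decreases by at least rho1 |A x_(k+1) - b|^2 + rho2 |W x_(k+1) - y_(k+1)|^2
   + rho2 |y_k - y_(k-1)|^2 at each step.  Hence E_k converges, these increments tend to 0, the
   errors y_k - yhat stay bounded, and so E_k - D_k tends to 0: D_k converges with E_k. *)

From Stdlib Require Import Reals Lra Lia.
Open Scope R_scope.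

Section InnerProduct.
Variable H : Hilbert.

Lemma hinner_add_r (u v w : H) : hinner u (hadd v w) = hinner u v + hinner u w.
Proof. rewrite !(hinner_sym _ u). apply hinner_add_l. Qed.

Lemma hinner_scal_r a (u v : H) : hinner u (hscal a v) = a * hinner u v.
Proof. rewrite !(hinner_sym _ u). apply hinner_scal_l. Qed.

Lemma hadd_0l (u : H) : hadd hzero u = u.
Proof. rewrite hadd_comm. apply hadd_zero. Qed.

Lemma hscal_0l (u : H) : hscal 0 u = hzero.
Proof.
  set (z := hscal 0 u).
  assert (zz : hadd z z = z) by (unfold z; rewrite <- hscal_distr_r; f_equal; ring).
  rewrite <- (hadd_opp _ z).
  transitivity (hadd (hadd z z) (hopp z)); [| now rewrite zz].
  rewrite <- hadd_assoc, hadd_opp, hadd_zero. reflexivity.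
Qed.

Lemma hopp_scal (u : H) : hopp u = hscal (-1) u.
Proof.
  assert (E : hadd u (hscal (-1) u) = hzero).
  { rewrite <- (hscal_one _ u) at 1. rewrite <- hscal_distr_r.
    replace (1 + -1) with 0 by ring. apply hscal_0l. }
  rewrite <- (hadd_zero _ (hopp u)), <- E, hadd_assoc, (hadd_comm _ (hopp u)), hadd_opp.
  apply hadd_0l.
Qed.

Lemma hnorm_sq (u : H) : (hnorm u)^2 = hinner u u.
Proof. unfold hnorm. rewrite pow2_sqrt; [reflexivity | apply hinner_pos]. Qed.

Lemma hadd_hsub (u v w : H) : hadd (hsub v w) (hsub u v) = hsub u w.
Proof.
  unfold hsub. rewrite (hadd_comm _ (hadd v _)), <- hadd_assoc, (hadd_assoc _ (hopp v)).
  rewrite (hadd_comm _ (hopp v)), hadd_opp, hadd_0l. reflexivity.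
Qed.

End InnerProduct.

Tactic Notation "inner_expand" :=
  unfold hsub; rewrite ?hnorm_sq, ?hopp_scal;
  repeat rewrite ?hinner_add_l, ?hinner_add_r, ?hinner_scal_l, ?hinner_scal_r.
Tactic Notation "inner_expand" "in" hyp(K) :=
  unfold hsub in K; rewrite ?hnorm_sq, ?hopp_scal in K;
  repeat rewrite ?hinner_add_l, ?hinner_add_r, ?hinner_scal_l, ?hinner_scal_r in K.
Tactic Notation "inner_expand" "in" "*" :=
  unfold hsub in *; rewrite ?hnorm_sq, ?hopp_scal in *;
  repeat rewrite ?hinner_add_l, ?hinner_add_r, ?hinner_scal_l, ?hinner_scal_r in *.

Lemma Cauchy_Schwarz (H : Hilbert) (u v : H) : (hinner u v)^2 <= hinner u u * hinner v v.
Proof.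
  destruct (Req_dec (hinner v v) 0) as [v0 | v0].
  - apply hinner_def in v0. subst v. rewrite <- (hscal_0l _ hzero).
    rewrite hinner_scal_r, hinner_scal_l. nra.
  - pose proof (hinner_pos _ v).
    pose proof (hinner_pos _ (hadd (hscal (hinner v v) u) (hscal (- hinner u v) v))) as P.
    inner_expand in P. rewrite (hinner_sym _ v u) in P.
    assert (0 <= hinner v v * (hinner u u * hinner v v - hinner u v ^ 2)) by nra.
    nra.
Qed.

Lemma hinner_hadd_le (H : Hilbert) (u v : H) :
  hinner (hadd u v) (hadd u v) <= 2 * hinner u u + 2 * hinner v v.
Proof.
  pose proof (hinner_pos _ (hsub u v)) as P.
  inner_expand in *. rewrite (hinner_sym _ v u) in *. lra.
Qed.

Lemma cv_unshift (u : nat -> R) l : Un_cv (fun n => u (S n)) l -> Un_cv u l.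
Proof.
  intros cv eps eps_pos. destruct (cv eps eps_pos) as [N HN]. exists (S N).
  intros [|n] Hn; [lia | apply HN; lia].
Qed.

Lemma cv_shift (u : nat -> R) l : Un_cv u l -> Un_cv (fun n => u (S n)) l.
Proof.
  intros cv eps eps_pos. destruct (cv eps eps_pos) as [N HN]. exists N.
  intros n Hn. apply HN. lia.
Qed.

Lemma cv_const c : Un_cv (fun _ => c) c.
Proof.
  intros eps eps_pos. exists 0%nat. intros. unfold Rdist. rewrite Rminus_diag, Rabs_R0. lra.
Qed.

Lemma cv_scal0 k (u : nat -> R) : Un_cv u 0 -> Un_cv (fun n => k * u n) 0.
Proof. intro cv. replace 0 with (k * 0) by ring. apply CV_mult; [apply cv_const | exact cv]. Qed.

Lemma cv_plus0 (u v : nat -> R) : Un_cv u 0 -> Un_cv v 0 -> Un_cv (fun n => u n + v n) 0.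
Proof. intros. replace 0 with (0 + 0) by ring. apply CV_plus; assumption. Qed.

Lemma cv_squeeze0 (u v : nat -> R) : (forall n, 0 <= u n <= v n) -> Un_cv v 0 -> Un_cv u 0.
Proof.
  intros uv cv eps eps_pos. destruct (cv eps eps_pos) as [N HN]. exists N. intros n Hn.
  specialize (HN n Hn). specialize (uv n). unfold Rdist in *. rewrite Rminus_0_r in *.
  rewrite Rabs_right in *; lra.
Qed.

Lemma cv_sqr0 (u v : nat -> R) : (forall n, u n ^ 2 <= v n) -> Un_cv v 0 -> Un_cv u 0.
Proof.
  intros uv cv eps eps_pos. destruct (cv (eps * eps) ltac:(nra)) as [N HN]. exists N.
  intros n Hn. specialize (HN n Hn). specialize (uv n). unfold Rdist in *.
  rewrite Rminus_0_r in *. apply Rabs_def2 in HN.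
  pose proof (pow2_abs (u n)). destruct (Rlt_or_le (Rabs (u n)) eps) as [| big]; [assumption |].
  assert (eps * eps <= Rabs (u n) * Rabs (u n)) by (apply Rmult_le_compat; lra).
  simpl in *. lra.
Qed.

Lemma cv0_of_telescoping (u v : nat -> R) k :
  0 < k -> (forall n, 0 <= v n) -> (forall n, k * v n <= u n - u (S n)) ->
  (exists l, Un_cv u l) -> Un_cv v 0.
Proof.
  intros k_pos v_ge0 tele [l cv].
  apply cv_squeeze0 with (fun n => / k * (u n - u (S n))).
  - intro n. split; [apply v_ge0 |].
    apply Rmult_le_reg_l with k; [lra |]. rewrite <- Rmult_assoc, Rinv_r; [| lra].
    specialize (tele n). lra.
  - apply cv_scal0. replace 0 with (l - l) by ring.
    apply CV_minus; [exact cv | apply cv_shift, cv].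
Qed.

Lemma nonincreasing_nonneg_cv (u : nat -> R) :
  (forall n, u (S n) <= u n) -> (forall n, 0 <= u n) -> exists l, Un_cv u l.
Proof.
  intros dec pos. destruct (decreasing_cv u dec) as [l cv]; [| now exists l].
  exists 0. intros r [n ->]. unfold opp_seq. specialize (pos n). lra.
Qed.

Section Lyapunov.
Context {Y H : Hilbert}.
Variables (rho1 rho2 c al : R).
Hypotheses (rho1_pos : 0 < rho1) (rho2_pos : 0 < rho2) (c_pos : 0 < c).
Hypothesis al_c : al * c = rho2 + c.

(* In the application [D] is the Bregman gap at step k, [d = y_k - y_(k-1)],
   [r = W x_k - y_k], [e = y_k - yhat] and [s = A x_k - b], so that
   [r + e = W x_k - yhat] and [r + d = W x_k - y_(k-1)]. *)
Definition lyapunov_excess (d r e : Y) (s : H) : R :=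
  rho2 * hinner d (hadd r e) + al * (rho1 * hinner s s + rho2 * hinner (hadd r d) (hadd r d)).

Definition lyapunov (D : R) (d r e : Y) (s : H) : R := D + lyapunov_excess d r e s.

Lemma lyapunov_weight_ge1 : 1 <= al.
Proof. apply Rmult_le_reg_r with c; lra. Qed.

Lemma lyapunov_ge D d r e s :
  c * hinner e e <= D -> 2 * c * hinner d d <= rho2 * hinner r d ->
  c / 2 * hinner e e <= lyapunov D d r e s.
Proof.
  intros De rd. unfold lyapunov, lyapunov_excess.
  set (Q := rho1 * hinner s s + rho2 * hinner (hadd r d) (hadd r d)).
  apply Rmult_le_reg_l with (2 * c); [lra |].
  replace (2 * c * (D + (rho2 * hinner d (hadd r e) + al * Q)))
    with (2 * c * D + 2 * c * (rho2 * hinner d (hadd r e)) + 2 * (rho2 + c) * Q)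
    by (rewrite <- al_c; ring).
  pose proof (hinner_pos _ (hadd (hscal c e) (hscal rho2 d))) as young.
  pose proof (hinner_pos _ r). pose proof (hinner_pos _ d). pose proof (hinner_pos _ s).
  unfold Q. inner_expand in *. rewrite (hinner_sym _ e d), (hinner_sym _ d r) in *.
  assert (0 <= hinner r d) by nra.
  assert (c * (c * hinner e e) <= c * D) by (apply Rmult_le_compat_l; lra).
  assert (0 <= (rho2 + c) * (rho1 * hinner s s)) by (apply Rmult_le_pos; nra).
  assert (0 <= (rho2 + c) * (rho2 * hinner r r)) by (apply Rmult_le_pos; nra).
  assert (0 <= (rho2 + c) * (rho2 * hinner r d)) by (apply Rmult_le_pos; nra).
  assert (0 <= c * (rho2 * hinner r d)) by (apply Rmult_le_pos; nra).
  assert (0 <= c * (rho2 * hinner d d)) by (apply Rmult_le_pos; nra).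
  assert (0 <= rho2 * (rho2 * hinner d d)) by (apply Rmult_le_pos; nra).
  lra.
Qed.

Lemma lyapunov_decrease D D' d d' r r' e s s' :
  rho1 * hinner s' s' + rho2 * hinner (hsub (hadd r' d') d) (hadd (hadd r' e) d') = 0 ->
  rho1 * hinner s' (hsub s' s) + rho2 * hinner (hsub (hadd r' d') d) (hsub (hadd r' d') r) = 0 ->
  D' - D <= rho2 * hinner r' (hadd e d') ->
  2 * c * hinner d d <= rho2 * hinner r d ->
  lyapunov D' d' r' (hadd e d') s'
  <= lyapunov D d r e s - rho1 * hinner s' s' - rho2 * hinner r' r' - rho2 * hinner d d.
Proof.
  intros stat_hat stat_prev DD' rd.
  pose proof lyapunov_weight_ge1 as al_ge1.
  (* [v] is the change of [r + d]; the cross term [<d, v>] is absorbed using [al >= 1]. *)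
  set (v := hsub (hadd r' d') (hadd r d)).
  assert (dv : hinner d v <= hinner v v + hinner d d / 4).
  { pose proof (hinner_pos _ (hsub (hscal 2 v) d)) as P.
    inner_expand in P. rewrite (hinner_sym _ v d) in P. lra. }
  assert (rho2 * hinner d v <= al * rho2 * hinner v v + rho2 * hinner d d / 4).
  { pose proof (hinner_pos _ v).
    assert (rho2 * hinner d v <= rho2 * (hinner v v + hinner d d / 4))
      by (apply Rmult_le_compat_l; lra).
    assert (0 <= (al - 1) * rho2 * hinner v v) by (repeat apply Rmult_le_pos; lra).
    nra. }
  assert (0 <= al * rho1 * hinner (hsub s' s) (hsub s' s)).
  { pose proof (hinner_pos _ (hsub s' s)). apply Rmult_le_pos; nra. }
  assert (2 * (rho2 + c) * hinner d d <= al * (rho2 * hinner r d)).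
  { rewrite <- al_c. pose proof (hinner_pos _ d). nra. }
  assert (al * (rho1 * hinner s' (hsub s' s)
     + rho2 * hinner (hsub (hadd r' d') d) (hsub (hadd r' d') r)) = 0)
    by (rewrite stat_prev; ring).
  assert (0 <= c * hinner d d) by (pose proof (hinner_pos _ d); nra).
  assert (0 <= rho2 * hinner d d) by (pose proof (hinner_pos _ d); nra).
  unfold lyapunov, lyapunov_excess, v in *. inner_expand in *.
  rewrite ?(hinner_sym _ d r), ?(hinner_sym _ e r), ?(hinner_sym _ r' r), ?(hinner_sym _ d' r),
    ?(hinner_sym _ e d), ?(hinner_sym _ r' d), ?(hinner_sym _ d' d),
    ?(hinner_sym _ r' e), ?(hinner_sym _ d' e), ?(hinner_sym _ d' r'),
    ?(hinner_sym _ s' s) in *.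
  lra.
Qed.

Lemma lyapunov_excess_cv0 (d r e : nat -> Y) (s : nat -> H) M :
  Un_cv (fun n => hinner (d n) (d n)) 0 -> Un_cv (fun n => hinner (r n) (r n)) 0 ->
  Un_cv (fun n => hinner (s n) (s n)) 0 -> (forall n, hinner (e n) (e n) <= M) ->
  Un_cv (fun n => lyapunov_excess (d n) (r n) (e n) (s n)) 0.
Proof.
  intros d0 r0 s0 e_bd. unfold lyapunov_excess.
  apply cv_plus0; [apply cv_scal0 | apply cv_scal0, cv_plus0; apply cv_scal0; [exact s0 |]].
  - apply cv_sqr0 with (fun n => hinner (d n) (d n) * (2 * hinner (r n) (r n) + 2 * M)).
    + intro n. pose proof (Cauchy_Schwarz _ (d n) (hadd (r n) (e n))).
      pose proof (hinner_hadd_le _ (r n) (e n)). pose proof (hinner_pos _ (d n)).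
      pose proof (e_bd n).
      assert (hinner (d n) (d n) * hinner (hadd (r n) (e n)) (hadd (r n) (e n))
              <= hinner (d n) (d n) * (2 * hinner (r n) (r n) + 2 * M))
        by (apply Rmult_le_compat_l; lra).
      lra.
    + replace 0 with (0 * (2 * 0 + 2 * M)) by ring.
      apply CV_mult; [exact d0 |]. apply CV_plus; [apply CV_mult; [apply cv_const | exact r0] | apply cv_const].
  - apply cv_squeeze0 with (fun n => 2 * hinner (r n) (r n) + 2 * hinner (d n) (d n)).
    + intro n. split; [apply hinner_pos | apply hinner_hadd_le].
    + apply cv_plus0; apply cv_scal0; assumption.
Qed.

End Lyapunov.

Lemma nonneg_quadratic_linear_coeff0 g q : 0 <= q -> (forall t, 0 <= t * g + t * t * q) -> g = 0.
Proof.
  intros q_ge0 nonneg. set (t := - g / (1 + q)). specialize (nonneg t).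
  assert (t * (1 + q) = - g) by (unfold t; field; lra).
  assert (t = 0) by nra. nra.
Qed.

Lemma quadratic_objective_stationary (H Y : Hilbert) (lam : H) (mu : Y) (b : H) (w : Y)
    (rho1 rho2 : R) (Ax Az : H) (Wx Wz : Y) :
  0 < rho1 -> 0 < rho2 ->
  (forall t, hinner lam Ax + hinner mu Wx + rho1 / 2 * (hnorm (hsub Ax b))^2
               + rho2 / 2 * (hnorm (hsub Wx w))^2
    <= hinner lam (hadd Ax (hscal t Az)) + hinner mu (hadd Wx (hscal t Wz))
       + rho1 / 2 * (hnorm (hsub (hadd Ax (hscal t Az)) b))^2
       + rho2 / 2 * (hnorm (hsub (hadd Wx (hscal t Wz)) w))^2) ->
  hinner (hadd lam (hscal rho1 (hsub Ax b))) Az + hinner (hadd mu (hscal rho2 (hsub Wx w))) Wz = 0.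
Proof.
  intros rho1_pos rho2_pos min_on_line.
  apply (nonneg_quadratic_linear_coeff0 _ (rho1 / 2 * hinner Az Az + rho2 / 2 * hinner Wz Wz)).
  { pose proof (hinner_pos _ Az); pose proof (hinner_pos _ Wz). nra. }
  intro t. specialize (min_on_line t). inner_expand in *.
  rewrite ?(hinner_sym _ Az Ax), ?(hinner_sym _ Az b), ?(hinner_sym _ Ax b),
    ?(hinner_sym _ Wz Wx), ?(hinner_sym _ Wz w), ?(hinner_sym _ Wx w) in *.
  lra.
Qed.

(* Compare the minimiser y' with the point t z + (1 - t) y' on the segment, for the
   value of t that balances the strong convexity of f against the quadratic term. *)
Lemma y_objective_strong_subgradient (Y : Hilbert) (f : Y -> ereal) (c0 rho2 : R)
    (mu w y' z : Y) (fy fz : R) :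
  0 < c0 -> 0 < rho2 -> strongly_convex f c0 -> f y' = Fin fy -> f z = Fin fz ->
  (forall z', in_dom f z' -> y_objective f rho2 mu w y' <= y_objective f rho2 mu w z') ->
  fy + hinner (hadd mu (hscal rho2 (hsub w y'))) (hsub z y')
     + c0 / 2 * hinner (hsub z y') (hsub z y') <= fz.
Proof.
  intros c0_pos rho2_pos sc fy_def fz_def y'_min.
  set (t := c0 / (2 * c0 + rho2)).
  assert (t_pos : 0 < t) by (unfold t; apply Rdiv_lt_0_compat; lra).
  assert (t_lt1 : t < 1).
  { unfold t. apply Rmult_lt_reg_r with (2 * c0 + rho2); [lra |].
    unfold Rdiv. rewrite Rmult_assoc, Rinv_l; lra. }
  destruct (sc z y' t fz fy ltac:(lra) fz_def fy_def) as [fzt [fzt_def convex]].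
  specialize (y'_min _ (ex_intro _ fzt fzt_def)). unfold y_objective in y'_min.
  rewrite fzt_def, fy_def in y'_min. cbv [real_of] in y'_min.
  set (zt := hadd (hscal t z) (hscal (1 - t) y')) in *.
  set (N := hinner (hsub z y') (hsub z y')).
  set (G := hinner (hadd mu (hscal rho2 (hsub w y'))) (hsub z y')).
  assert (E1 : hinner mu zt = t * hinner mu z + (1 - t) * hinner mu y')
    by (unfold zt; inner_expand; ring).
  assert (E2 : hinner (hsub w zt) (hsub w zt) = hinner (hsub w y') (hsub w y')
      - 2 * t * hinner (hsub w y') (hsub z y') + t * t * N).
  { unfold N, zt. inner_expand.
    rewrite ?(hinner_sym _ z w), ?(hinner_sym _ y' w), ?(hinner_sym _ y' z). ring. }
  assert (E3 : G = hinner mu z - hinner mu y' + rho2 * hinner (hsub w y') (hsub z y'))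
    by (unfold G; inner_expand; ring).
  repeat rewrite hnorm_sq in y'_min. rewrite hnorm_sq in convex. fold N in convex.
  rewrite E1, E2 in y'_min.
  assert (balance : c0 * t * (1 - t) - rho2 * t * t / 2 - t * c0 / 2 = 0)
    by (unfold t; field; lra).
  assert (N * (c0 * t * (1 - t) - rho2 * t * t / 2 - t * c0 / 2) = 0) by (rewrite balance; ring).
  assert (0 <= t * (fz - fy - G - c0 / 2 * N)) by (rewrite E3; lra).
  assert (0 <= fz - fy - G - c0 / 2 * N) by nra.
  lra.
Qed.

Section ADMM.
Variables (X Y H : Hilbert) (A : X -> H) (DW : X -> Prop) (W : X -> Y) (f : Y -> ereal)
  (c0 : R) (b : H) (rho1 rho2 : R)
  (x : nat -> X) (y : nat -> Y) (lam : nat -> H) (mu : nat -> Y).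
Hypotheses (A_add : forall u v, A (hadd u v) = hadd (A u) (A v))
  (A_scal : forall a u, A (hscal a u) = hscal a (A u)).
Hypotheses (DW_add : forall u v, DW u -> DW v -> DW (hadd u v))
  (DW_scal : forall a u, DW u -> DW (hscal a u))
  (W_add : forall u v, DW u -> DW v -> W (hadd u v) = hadd (W u) (W v))
  (W_scal : forall a u, DW u -> W (hscal a u) = hscal a (W u)).
Hypotheses (c0_pos : 0 < c0) (f_sc : strongly_convex f c0)
  (rho1_pos : 0 < rho1) (rho2_pos : 0 < rho2).
Hypothesis admm : is_ADMM_sequence A DW W f b rho1 rho2 x y lam mu.

Definition residual_A k := hsub (A (x k)) b.
Definition residual_W k := hsub (W (x k)) (y k).
Definition y_increment k := hsub (y (S k)) (y k).

Lemma x_update_in_domain k : DW (x (S k)).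
Proof. apply (admm k). Qed.

Lemma y_update_in_domain k : in_dom f (y (S k)).
Proof. apply (admm k). Qed.

Lemma x_update_stationary k z : DW z ->
  hinner (hadd (lam k) (hscal rho1 (residual_A (S k)))) (A z)
  + hinner (hadd (mu k) (hscal rho2 (hsub (W (x (S k))) (y k)))) (W z) = 0.
Proof.
  intro z_dom. destruct (admm k) as [[x_dom x_min] _].
  apply quadratic_objective_stationary; [assumption .. |]. intro t.
  assert (DW (hadd (x (S k)) (hscal t z))) by auto.
  specialize (x_min _ ltac:(eassumption)). unfold x_objective in x_min.
  rewrite A_add, A_scal, W_add, W_scal in x_min; auto.
Qed.

Lemma y_update_strong_subgradient k z fz : f z = Fin fz ->
  real_of (f (y (S k))) + hinner (mu (S k)) (hsub z (y (S k)))
  + c0 / 2 * hinner (hsub z (y (S k))) (hsub z (y (S k))) <= fz.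
Proof.
  intro fz_def. destruct (admm k) as [_ [[[fy fy_def] y_min] [_ mu_def]]].
  rewrite fy_def, mu_def. cbn [real_of].
  exact (y_objective_strong_subgradient _ f _ _ _ _ _ _ _ _ c0_pos rho2_pos f_sc fy_def fz_def y_min).
Qed.

(* Difference of two consecutive stationarity conditions: the multipliers cancel. *)
Lemma x_update_stationary_diff n z : DW z ->
  rho1 * hinner (residual_A (S (S n))) (A z)
  + rho2 * hinner (hsub (hadd (residual_W (S (S n))) (y_increment (S n))) (y_increment n)) (W z)
  = 0.
Proof.
  intro z_dom.
  pose proof (x_update_stationary (S n) z z_dom) as stat1.
  pose proof (x_update_stationary n z z_dom) as stat0.
  destruct (admm n) as [_ [_ [lam_def mu_def]]]. rewrite lam_def, mu_def in stat1.
  unfold residual_A, residual_W, y_increment in *.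
  inner_expand in stat1. inner_expand in stat0. inner_expand. lra.
Qed.

Lemma y_increment_monotone n :
  2 * (c0 / 2) * hinner (y_increment (S n)) (y_increment (S n))
  <= rho2 * hinner (residual_W (S (S n))) (y_increment (S n)).
Proof.
  destruct (y_update_in_domain n) as [f1 f1_def].
  destruct (y_update_in_domain (S n)) as [f2 f2_def].
  pose proof (y_update_strong_subgradient (S n) (y (S n)) f1 f1_def) as sg1.
  pose proof (y_update_strong_subgradient n (y (S (S n))) f2 f2_def) as sg2.
  destruct (admm (S n)) as [_ [_ [_ mu_def]]]. rewrite mu_def, f2_def in sg1.
  rewrite f1_def in sg2. cbn [real_of] in sg1, sg2.
  unfold residual_W, y_increment. inner_expand in sg1. inner_expand in sg2. inner_expand. lra.
Qed.

Variables (xhat : X) (yhat : Y).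
Hypotheses (xhat_dom : DW xhat) (yhat_dom : in_dom f yhat)
  (A_xhat : A xhat = b) (W_xhat : W xhat = yhat).

Definition y_error k := hsub (y k) yhat.
Definition bregman_gap k := bregman f (mu k) yhat (y k).

Lemma y_error_succ k : y_error (S k) = hadd (y_error k) (y_increment k).
Proof. symmetry. apply hadd_hsub. Qed.

Lemma bregman_gap_ge k : c0 / 2 * hinner (y_error (S k)) (y_error (S k)) <= bregman_gap (S k).
Proof.
  destruct yhat_dom as [fh fh_def]. destruct (y_update_in_domain k) as [fy fy_def].
  pose proof (y_update_strong_subgradient k yhat fh fh_def) as sg.
  unfold bregman_gap, bregman, y_error. rewrite fh_def, fy_def in *. cbn [real_of] in *.
  inner_expand in sg. inner_expand. lra.
Qed.

Lemma bregman_gap_succ k :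
  bregman_gap (S (S k)) - bregman_gap (S k)
  <= rho2 * hinner (residual_W (S (S k))) (hadd (y_error (S k)) (y_increment (S k))).
Proof.
  destruct (y_update_in_domain k) as [f1 f1_def].
  destruct (y_update_in_domain (S k)) as [f2 f2_def].
  pose proof (y_update_strong_subgradient k (y (S (S k))) f2 f2_def) as sg.
  pose proof (hinner_pos _ (hsub (y (S (S k))) (y (S k)))).
  destruct (admm (S k)) as [_ [_ [_ mu_def]]].
  unfold bregman_gap, bregman, residual_W, y_error, y_increment. rewrite mu_def.
  rewrite f1_def, f2_def in *. cbn [real_of] in *.
  inner_expand in sg. inner_expand in *. nra.
Qed.

Let c := c0 / 2.
Let al := (rho2 + c) / c.
Let al_c : al * c = rho2 + c.
Proof. unfold al, c. field. lra. Qed.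

Definition admm_lyapunov n :=
  lyapunov rho1 rho2 al (bregman_gap (S (S n))) (y_increment (S n)) (residual_W (S (S n)))
    (y_error (S (S n))) (residual_A (S (S n))).

Lemma admm_lyapunov_ge n : c / 2 * hinner (y_error (S (S n))) (y_error (S (S n))) <= admm_lyapunov n.
Proof.
  apply lyapunov_ge; [lra | lra | unfold c; lra | exact al_c | apply bregman_gap_ge | apply y_increment_monotone].
Qed.

Lemma admm_lyapunov_decrease n :
  admm_lyapunov (S n)
  <= admm_lyapunov n - rho1 * hinner (residual_A (S (S (S n)))) (residual_A (S (S (S n))))
     - rho2 * hinner (residual_W (S (S (S n)))) (residual_W (S (S (S n))))
     - rho2 * hinner (y_increment (S n)) (y_increment (S n)).
Proof.
  unfold admm_lyapunov. rewrite (y_error_succ (S (S n))).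
  apply (lyapunov_decrease rho1 rho2 c al); [lra | lra | unfold c; lra | exact al_c | | |
    apply bregman_gap_succ | apply y_increment_monotone].
  - assert (z_dom : DW (hadd (x (S (S (S n)))) (hscal (-1) xhat))) by auto using x_update_in_domain.
    pose proof (x_update_stationary_diff (S n) _ z_dom) as stat.
    rewrite A_add, A_scal, A_xhat, W_add, W_scal, W_xhat in stat; auto using x_update_in_domain.
    unfold residual_A, residual_W, y_error, y_increment in *.
    inner_expand in stat. inner_expand. lra.
  - assert (z_dom : DW (hadd (x (S (S (S n)))) (hscal (-1) (x (S (S n))))))
      by auto using x_update_in_domain.
    pose proof (x_update_stationary_diff (S n) _ z_dom) as stat.
    rewrite A_add, A_scal, W_add, W_scal in stat; auto using x_update_in_domain.
    unfold residual_A, residual_W, y_increment in *.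
    inner_expand in stat. inner_expand. lra.
Qed.

Theorem admm_bregman_gap_cv : exists L, Un_cv (fun k => bregman_gap (S k)) L.
Proof.
  pose proof (fun n => hinner_pos _ (residual_A (S (S (S n))))) as sA_ge0.
  pose proof (fun n => hinner_pos _ (residual_W (S (S (S n))))) as rW_ge0.
  pose proof (fun n => hinner_pos _ (y_increment (S n))) as d_ge0.
  pose proof admm_lyapunov_decrease as decrease.
  assert (E_ge0 : forall n, 0 <= admm_lyapunov n).
  { intro n. pose proof (admm_lyapunov_ge n). pose proof (hinner_pos _ (y_error (S (S n)))).
    unfold c in *. nra. }
  assert (E_dec : forall n, admm_lyapunov (S n) <= admm_lyapunov n).
  { intro n. specialize (decrease n). specialize (sA_ge0 n). specialize (rW_ge0 n).
    specialize (d_ge0 n). nra. }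
  assert (E_cv : exists L, Un_cv admm_lyapunov L) by now apply nonincreasing_nonneg_cv.
  assert (sA_cv0 : Un_cv (fun n => hinner (residual_A (S (S n))) (residual_A (S (S n)))) 0).
  { apply cv_unshift, (cv0_of_telescoping admm_lyapunov _ rho1); [lra | exact sA_ge0 | | exact E_cv].
    intro n. specialize (decrease n). specialize (rW_ge0 n). specialize (d_ge0 n). nra. }
  assert (rW_cv0 : Un_cv (fun n => hinner (residual_W (S (S n))) (residual_W (S (S n)))) 0).
  { apply cv_unshift, (cv0_of_telescoping admm_lyapunov _ rho2); [lra | exact rW_ge0 | | exact E_cv].
    intro n. specialize (decrease n). specialize (sA_ge0 n). specialize (d_ge0 n). nra. }
  assert (d_cv0 : Un_cv (fun n => hinner (y_increment (S n)) (y_increment (S n))) 0).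
  { apply (cv0_of_telescoping admm_lyapunov _ rho2); [lra | exact d_ge0 | | exact E_cv].
    intro n. specialize (decrease n). specialize (sA_ge0 n). specialize (rW_ge0 n). nra. }
  assert (e_bd : forall n, hinner (y_error (S (S n))) (y_error (S (S n))) <= admm_lyapunov 0 / (c / 2)).
  { intro n. apply Rmult_le_reg_l with (c / 2); [unfold c; lra |].
    replace (c / 2 * (admm_lyapunov 0 / (c / 2))) with (admm_lyapunov 0) by (field; unfold c; lra).
    pose proof (admm_lyapunov_ge n).
    pose proof (decreasing_prop admm_lyapunov 0 n E_dec ltac:(lia)).
    lra. }
  destruct E_cv as [L E_cv]. exists L. apply cv_unshift.
  apply Un_cv_ext with (fun n => admm_lyapunov n
     - lyapunov_excess rho1 rho2 al (y_increment (S n)) (residual_W (S (S n)))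
         (y_error (S (S n))) (residual_A (S (S n)))).
  { intro n. unfold admm_lyapunov, lyapunov. ring. }
  replace L with (L - 0) by ring. apply CV_minus; [exact E_cv |].
  apply (lyapunov_excess_cv0 rho1 rho2 al _ _ _ _ (admm_lyapunov 0 / (c / 2))); assumption.
Qed.

End ADMM.

Theorem lemma2p6 :
  forall (X Y H : Hilbert) (A : X -> H) (f : Y -> ereal) (c0 : R)
         (DW : X -> Prop) (W : X -> Y) (c1 : R),
    (* (A1) *) bounded_linear A ->
    (* (A2) *) proper f -> lower_semicontinuous f -> c0 > 0 -> strongly_convex f c0 ->
    (* (A3) *) densely_defined_closed_linear DW W ->
    (* (A4) *) c1 > 0 ->
      (forall x, DW x -> (hnorm (A x))^2 + (hnorm (W x))^2 >= c1 * (hnorm x)^2) ->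
  forall (b : H),
    (* b is consistent *)
    (exists x, DW x /\ in_dom f (W x) /\ A x = b) ->
  forall (xhat : X) (yhat : Y),
    (* (xhat, yhat) is a feasible point *)
    DW xhat -> in_dom f yhat -> A xhat = b -> W xhat = yhat ->
  forall (rho1 rho2 : R), rho1 > 0 -> rho2 > 0 ->
  forall (x : nat -> X) (y : nat -> Y) (lam : nat -> H) (mu : nat -> Y),
    is_ADMM_sequence A DW W f b rho1 rho2 x y lam mu ->
    exists L : R,
      Un_cv (fun k => bregman f (mu (S k)) yhat (y (S k))) L.
Proof.
  intros X Y H A f c0 DW W c1 [[A_add A_scal] _] _ _ c0_pos f_sc
    [[_ [DW_add DW_scal]] [W_add [W_scal _]]] _ _ b _ xhat yhat xhat_dom yhat_dom A_xhat W_xhat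
    rho1 rho2 rho1_pos rho2_pos x y lam mu admm.
  exact (admm_bregman_gap_cv X Y H A DW W f c0 b rho1 rho2 x y lam mu A_add A_scal
    DW_add DW_scal W_add W_scal c0_pos f_sc rho1_pos rho2_pos admm xhat yhat xhat_dom yhat_dom
    A_xhat W_xhat).
Qed.
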